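(* Let $X$ be a Tychonoff space. The following are equivalent: (1) $C_\gamma(X)$ is $\aleph_0$-bounded; (2) $C_m(X)$ is $\aleph_0$-bounded; (3) $C_u(X)$ is $\aleph_0$-bounded; (4) $C_u(X)$ is separable; (5) $X$ is compact and metrizable; (6) $C_\gamma(X)$ is second countable; (7) $C_\gamma(X)$ has a countable network; (8) $C_\gamma(X)$ is separable; (9) $C_\gamma(X)$ is ccc; (10) $C_m(X)$ is separable; (11) $C_m(X)$ is Lindelöf; (12) $C_m(X)$ is ccc.
   Context: $C(X)$ is the set of continuous real-valued functions on a Tychonoff space $X$, a topological group under pointwise addition with identity the zero function. $C_u(X)$: topology of uniform convergence, basic neighborhoods of $f$ are $\{g:|g(x)-f(x)|<\varepsilon\ \forall x\in X\}$, $\varepsilon>0$. $C_m(X)$: $m$-topology, basic neighborhoods $\{g:|g(x)-f(x)|<\varepsilon(x)\ \forall x\in X\}$ with $\varepsilon\in C(X)$ strictly positive. $C_\gamma(X)$: graph topology, basic neighborhoods $\{g:|g(x)-f(x)|<\eta(x)\ \forall x\in X\}$ with $\eta$ a strictly positive lower semicontinuous real-valued function on $X$. A topological group $G$ with identity $e$ is $\aleph_0$-bounded if for each neighborhood $U$ of $e$ there is a countable $A\subset G$ with $G=A\cdot U$. ccc means every family of pairwise disjoint nonempty open sets is countable. *)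

From Stdlib Require Import Reals List Classical.
Open Scope R_scope.

Definition Subset {T : Type} (A B : T -> Prop) : Prop := forall x, A x -> B x.

Definition is_topology {T : Type} (op : (T -> Prop) -> Prop) : Prop :=
  op (fun _ => True) /\
  (forall U V, op U -> op V -> op (fun x => U x /\ V x)) /\
  (forall F : (T -> Prop) -> Prop, (forall U, F U -> op U) ->
     op (fun x => exists U, F U /\ U x)).

Definition closed {T : Type} (op : (T -> Prop) -> Prop) (A : T -> Prop) : Prop :=
  op (fun x => ~ A x).

Definition R_open (U : R -> Prop) : Prop :=
  forall x, U x -> exists eps, 0 < eps /\ forall y, Rabs (y - x) < eps -> U y.

Definition continuous {T : Type} (op : (T -> Prop) -> Prop) (f : T -> R) : Prop :=
  forall U, R_open U -> op (fun x => U (f x)).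

Definition lsc {T : Type} (op : (T -> Prop) -> Prop) (f : T -> R) : Prop :=
  forall r, op (fun x => r < f x).

Definition T1 {T : Type} (op : (T -> Prop) -> Prop) : Prop :=
  forall x, closed op (fun y => y = x).

Definition completely_regular {T : Type} (op : (T -> Prop) -> Prop) : Prop :=
  forall (A : T -> Prop) x, closed op A -> ~ A x ->
    exists f, continuous op f /\ f x = 0 /\ forall y, A y -> f y = 1.

Definition tychonoff {T : Type} (op : (T -> Prop) -> Prop) : Prop :=
  is_topology op /\ T1 op /\ completely_regular op.

Definition countable {T : Type} (S : T -> Prop) : Prop :=
  exists f : T -> nat, forall a b, S a -> S b -> f a = f b -> a = b.

Definition compact_space {T : Type} (op : (T -> Prop) -> Prop) : Prop :=
  forall F : (T -> Prop) -> Prop, (forall U, F U -> op U) ->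
    (forall x, exists U, F U /\ U x) ->
    exists l : list (T -> Prop), (forall U, In U l -> F U) /\
      (forall x, exists U, In U l /\ U x).

Definition metrizable {T : Type} (op : (T -> Prop) -> Prop) : Prop :=
  exists d : T -> T -> R,
    (forall x y, 0 <= d x y) /\ (forall x y, d x y = 0 <-> x = y) /\
    (forall x y, d x y = d y x) /\ (forall x y z, d x z <= d x y + d y z) /\
    (forall U, op U <-> (forall x, U x -> exists eps, 0 < eps /\
                           forall y, d x y < eps -> U y)).

Definition separable {T : Type} (op : (T -> Prop) -> Prop) : Prop :=
  exists D : T -> Prop, countable D /\
    forall U, op U -> (exists x, U x) -> exists x, U x /\ D x.

Definition second_countable {T : Type} (op : (T -> Prop) -> Prop) : Prop :=
  exists B : (T -> Prop) -> Prop, countable B /\ (forall V, B V -> op V) /\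
    forall U x, op U -> U x -> exists V, B V /\ V x /\ Subset V U.

Definition countable_network {T : Type} (op : (T -> Prop) -> Prop) : Prop :=
  exists N : (T -> Prop) -> Prop, countable N /\
    forall U x, op U -> U x -> exists V, N V /\ V x /\ Subset V U.

Definition ccc {T : Type} (op : (T -> Prop) -> Prop) : Prop :=
  forall F : (T -> Prop) -> Prop,
    (forall U, F U -> op U /\ exists x, U x) ->
    (forall U V, F U -> F V -> U <> V -> forall x, ~ (U x /\ V x)) ->
    countable F.

Definition lindelof {T : Type} (op : (T -> Prop) -> Prop) : Prop :=
  forall F : (T -> Prop) -> Prop, (forall U, F U -> op U) ->
    (forall x, exists U, F U /\ U x) ->
    exists G, countable G /\ Subset G F /\ (forall x, exists U, G U /\ U x).

Definition CX {X : Type} (op : (X -> Prop) -> Prop) : Type :=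
  { f : X -> R | continuous op f }.

Definition Cu_open {X : Type} (op : (X -> Prop) -> Prop) (W : CX op -> Prop) : Prop :=
  forall f, W f -> exists eps, 0 < eps /\
    forall g : CX op, (forall x, Rabs (proj1_sig g x - proj1_sig f x) < eps) -> W g.

Definition Cm_open {X : Type} (op : (X -> Prop) -> Prop) (W : CX op -> Prop) : Prop :=
  forall f, W f -> exists eps : X -> R, continuous op eps /\ (forall x, 0 < eps x) /\
    forall g : CX op, (forall x, Rabs (proj1_sig g x - proj1_sig f x) < eps x) -> W g.

Definition Cgamma_open {X : Type} (op : (X -> Prop) -> Prop) (W : CX op -> Prop) : Prop :=
  forall f, W f -> exists eta : X -> R, lsc op eta /\ (forall x, 0 < eta x) /\
    forall g : CX op, (forall x, Rabs (proj1_sig g x - proj1_sig f x) < eta x) -> W g.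

Definition aleph0_bounded_C {X : Type} (op : (X -> Prop) -> Prop)
    (opC : (CX op -> Prop) -> Prop) : Prop :=
  forall U : CX op -> Prop,
    (exists V, opC V /\ Subset V U /\
       forall z : CX op, (forall x, proj1_sig z x = 0) -> V z) ->
    exists A : CX op -> Prop, countable A /\
      forall h : CX op, exists a u, A a /\ U u /\
        forall x, proj1_sig h x = proj1_sig a x + proj1_sig u x.

From Stdlib Require Import Reals List Classical.
From Stdlib Require Import Lra Lia ZArith ClassicalEpsilon FunctionalExtensionality PropExtensionality Cantor.
From mathcomp Require classical_sets.
Open Scope R_scope.

(* All twelve conditions are equivalent to the following property N (essentially (3)):
   for every [eps > 0] some countable set of continuous functions is [eps]-dense in
   the sup distance.  Each condition passes to [C_u(X)], whose topology is the coarsest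
   of the three, and there yields N (for ccc through a maximal [eps]-separated family).
   Conversely, N rules out locally finite families of bumps peaking along a sequence
   of points, since their [2^aleph_0] partial sums are pairwise at distance 1.  Hence
   [X] is pseudocompact; a countable dense subset of [C_u(X)] separates points from
   closed sets and so defines a metric, and pseudocompactness yields a uniform
   Lebesgue number, hence compactness.  For compact metric [X] the three topologies
   coincide, and minima of finitely many rational cones [q + L d(p, .)] are dense in
   [C_u(X)], which gives every condition. *)

Lemma pred_ext {T : Type} (P Q : T -> Prop) : (forall x, P x <-> Q x) -> P = Q.
Proof.
  intros H; apply functional_extensionality; intros x; apply propositional_extensionality; auto.
Qed.

Lemma countable_of_range {T : Type} (S : T -> Prop) (g : nat -> T) :
  (forall a, S a -> exists n, g n = a) -> countable S.
Proof.
  intros H. exists (fun a => epsilon (inhabits 0%nat) (fun n => g n = a)).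
  intros a b Sa Sb E.
  pose proof (epsilon_spec (inhabits 0%nat) (fun n => g n = a) (H a Sa)) as Ea.
  pose proof (epsilon_spec (inhabits 0%nat) (fun n => g n = b) (H b Sb)) as Eb.
  simpl in *. rewrite E in Ea. congruence.
Qed.

Lemma countable_enumeration {T : Type} (S : T -> Prop) (a0 : T) : S a0 -> countable S ->
  exists g : nat -> T, (forall n, S (g n)) /\ forall a, S a -> exists n, g n = a.
Proof.
  intros Sa0 [f Hf].
  set (P := fun n a => S a /\ (f a = n \/ ~ (exists b, S b /\ f b = n))).
  assert (Ex : forall n, exists a, P n a).
  { intros n. destruct (classic (exists b, S b /\ f b = n)) as [[b [Sb Eb]]|NE].
    - exists b. split; auto.
    - exists a0. split; auto. }
  exists (fun n => epsilon (inhabits a0) (P n)). split.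
  - intros n. exact (proj1 (epsilon_spec (inhabits a0) (P n) (Ex n))).
  - intros a Sa. exists (f a).
    destruct (epsilon_spec (inhabits a0) (P (f a)) (Ex (f a))) as [S1 [E1|E1]].
    + apply Hf; auto.
    + exfalso. apply E1. exists a. auto.
Qed.

Lemma countable_image {T U : Type} (S : T -> Prop) (g : T -> U) :
  countable S -> countable (fun y => exists a, S a /\ y = g a).
Proof.
  intros [c Hc]. destruct (classic (exists a, S a)) as [[a0 Sa0]|NE].
  - set (ch := fun y => epsilon (inhabits a0) (fun a => S a /\ y = g a)).
    exists (fun y => c (ch y)). intros x y Hx Hy E.
    pose proof (epsilon_spec (inhabits a0) (fun a => S a /\ x = g a) Hx) as [S1 E1].
    pose proof (epsilon_spec (inhabits a0) (fun a => S a /\ y = g a) Hy) as [S2 E2].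
    fold (ch x) in S1, E1. fold (ch y) in S2, E2.
    rewrite E1, E2. f_equal. apply Hc; auto.
  - exists (fun _ => 0%nat). intros x y [a [Sa _]]. exfalso; eauto.
Qed.

Lemma no_injection_bool_seq_nat :
  ~ exists f : (nat -> bool) -> nat, forall s t, f s = f t -> s = t.
Proof.
  intros [f Hf].
  set (g := fun n => epsilon (inhabits (fun _ : nat => true)) (fun s => f s = n)).
  assert (Hg : forall s, g (f s) = s).
  { intros s. apply Hf. unfold g.
    exact (epsilon_spec (inhabits (fun _ : nat => true)) (fun s0 => f s0 = f s)
             (ex_intro _ s eq_refl)). }
  set (diag := fun n => negb (g n n)).
  assert (E : diag (f diag) = g (f diag) (f diag)) by (rewrite Hg; reflexivity).
  unfold diag in E at 1. destruct (g (f diag) (f diag)); discriminate.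
Qed.

Lemma not_countable_of_bool_seq_injection {T : Type} (S : T -> Prop) (Phi : (nat -> bool) -> T) :
  (forall s, S (Phi s)) -> (forall s t, Phi s = Phi t -> s = t) -> ~ countable S.
Proof.
  intros HS Hi [f Hf]. apply no_injection_bool_seq_nat. exists (fun s => f (Phi s)).
  intros s t E. apply Hi. apply Hf; auto.
Qed.

Lemma of_nat_surj (a b : nat) : exists n, of_nat n = (a, b).
Proof. exists (to_nat (a, b)). apply cancel_of_to. Qed.

(* [to_nat (length l, m)] decodes to [l] when [m] nests the entries of [l] with [to_nat]. *)
Fixpoint nat_list_decode_len (k m : nat) : list nat :=
  match k with
  | O => nil
  | S k' => fst (of_nat m) :: nat_list_decode_len k' (snd (of_nat m))
  end.

Definition nat_list_decode (n : nat) : list nat :=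
  nat_list_decode_len (fst (of_nat n)) (snd (of_nat n)).

Lemma nat_list_decode_surj (l : list nat) : exists n, nat_list_decode n = l.
Proof.
  assert (H : exists m, nat_list_decode_len (length l) m = l).
  { induction l as [|a l [m Hm]]; simpl.
    - exists 0%nat. reflexivity.
    - exists (to_nat (a, m)). rewrite cancel_of_to. simpl. rewrite Hm. reflexivity. }
  destruct H as [m Hm]. exists (to_nat (length l, m)).
  unfold nat_list_decode. rewrite cancel_of_to. exact Hm.
Qed.

Lemma nat_above (y : R) : exists L : nat, y < INR L.
Proof.
  destruct (archimed (Rabs y)) as [Hup _]. exists (Z.to_nat (up (Rabs y))).
  pose proof (Rabs_pos y). pose proof (Rle_abs y).
  rewrite INR_IZR_INZ, Z2Nat.id. lra. apply le_IZR. simpl. lra.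
Qed.

Lemma inv_succ_pos (n : nat) : 0 < / (INR n + 1).
Proof. apply Rinv_0_lt_compat. pose proof (pos_INR n); lra. Qed.

Lemma inv_succ_le (m n : nat) : (m <= n)%nat -> / (INR n + 1) <= / (INR m + 1).
Proof.
  intros H. apply Rinv_le_contravar; [pose proof (pos_INR m); lra|].
  apply le_INR in H. lra.
Qed.

Lemma inv_succ_small (r : R) : 0 < r -> exists k, / (INR k + 1) < r.
Proof.
  intros Hr. destruct (nat_above (/ r)) as [k Hk]. exists k.
  rewrite <- (Rinv_inv r). apply Rinv_lt_contravar.
  - apply Rmult_lt_0_compat; [apply Rinv_0_lt_compat; auto|pose proof (pos_INR k); lra].
  - lra.
Qed.

Lemma list_choice {A B : Type} (P : A -> B -> Prop) (l : list B) :
  (forall b, In b l -> exists a, P a b) ->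
  exists la, forall b, In b l -> exists a, In a la /\ P a b.
Proof.
  induction l as [|b l IH]; intros H.
  - exists nil. intros b [].
  - destruct (H b (or_introl eq_refl)) as [a Ha].
    destruct IH as [la Hla]; [intros b' Hb'; apply H; right; auto|].
    exists (a :: la). intros b' [<-|Hb'].
    + exists a. split; [left|]; auto.
    + destruct (Hla b' Hb') as [a' [Ia' Pa']]. exists a'. split; [right|]; auto.
Qed.

Section Topology.
Context {X : Type} (op : (X -> Prop) -> Prop).
Hypothesis Ht : is_topology op.

Lemma open_of_local (P : X -> Prop) :
  (forall x, P x -> exists W, op W /\ W x /\ forall y, W y -> P y) -> op P.
Proof.
  intros H. destruct Ht as [_ [_ HU]].
  set (F := fun W => op W /\ forall y, W y -> P y).
  replace P with (fun x => exists U, F U /\ U x).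
  - apply HU. intros U [oU _]; auto.
  - apply pred_ext. intros x. split.
    + intros [U [[_ HU'] Ux]]. auto.
    + intros Px. destruct (H x Px) as [W [oW [Wx HW]]]. exists W. repeat split; auto.
Qed.

Lemma open_inter (U V : X -> Prop) : op U -> op V -> op (fun x => U x /\ V x).
Proof. destruct Ht as [_ [H _]]; auto. Qed.

Lemma open_full : op (fun _ => True).
Proof. destruct Ht as [H _]; auto. Qed.

Lemma open_forall_lt (P : nat -> X -> Prop) :
  (forall n, op (P n)) -> forall N, op (fun y => forall n, (n < N)%nat -> P n y).
Proof.
  intros HP N. induction N.
  - replace (fun y => forall n, (n < 0)%nat -> P n y) with (fun _ : X => True);
      [apply open_full|apply pred_ext; split; auto; intros; lia].
  - replace (fun y => forall n, (n < S N)%nat -> P n y)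
      with (fun y => (forall n, (n < N)%nat -> P n y) /\ P N y); [apply open_inter; auto|].
    apply pred_ext. intros y. split.
    + intros [H1 H2] n Hn. destruct (Nat.eq_dec n N) as [->|]; auto. apply H1; lia.
    + intros H. split; auto.
Qed.

Lemma open_Rabs_lt (g : X -> R) (c e : R) :
  continuous op g -> op (fun y => Rabs (g y - c) < e).
Proof.
  intros Hg. apply (Hg (fun r => Rabs (r - c) < e)). intros r Hr.
  exists (e - Rabs (r - c)). split; [lra|]. intros y Hy.
  pose proof (Rabs_triang (y - r) (r - c)). replace (y - r + (r - c)) with (y - c) in H by ring.
  lra.
Qed.

Lemma continuous_of_local (f : X -> R) :
  (forall x eps, 0 < eps -> exists W, op W /\ W x /\ forall y, W y -> Rabs (f y - f x) < eps) ->
  continuous op f.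
Proof.
  intros H U oU. apply open_of_local. intros x Ux.
  destruct (oU (f x) Ux) as [e [He HUe]].
  destruct (H x e He) as [W [oW [Wx HW]]]. exists W. auto.
Qed.

Lemma continuous_local (f : X -> R) : continuous op f ->
  forall x eps, 0 < eps -> exists W, op W /\ W x /\ forall y, W y -> Rabs (f y - f x) < eps.
Proof.
  intros Hf x eps He. exists (fun y => Rabs (f y - f x) < eps).
  split; [apply open_Rabs_lt; auto|]. split; auto.
  unfold Rminus. rewrite Rplus_opp_r, Rabs_R0. auto.
Qed.

Lemma continuous_const (c : R) : continuous op (fun _ => c).
Proof.
  apply continuous_of_local. intros x eps He. exists (fun _ => True).
  split; [apply open_full|split; auto].
  intros. unfold Rminus. rewrite Rplus_opp_r, Rabs_R0. auto.
Qed.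

Lemma continuous_lipschitz2 (f g : X -> R) (h : R -> R -> R) :
  continuous op f -> continuous op g ->
  (forall a b c d, Rabs (h a b - h c d) <= Rabs (a - c) + Rabs (b - d)) ->
  continuous op (fun x => h (f x) (g x)).
Proof.
  intros Hf Hg Hh. apply continuous_of_local. intros x eps He.
  destruct (continuous_local f Hf x (eps/2)) as [W1 [o1 [w1 H1]]]; [lra|].
  destruct (continuous_local g Hg x (eps/2)) as [W2 [o2 [w2 H2]]]; [lra|].
  exists (fun y => W1 y /\ W2 y). split; [apply open_inter; auto|split; auto].
  intros y [y1 y2]. specialize (H1 y y1). specialize (H2 y y2).
  pose proof (Hh (f y) (g y) (f x) (g x)). lra.
Qed.

Lemma continuous_plus f g : continuous op f -> continuous op g -> continuous op (fun x => f x + g x).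
Proof.
  intros; apply (continuous_lipschitz2 f g Rplus); auto. intros a b c d.
  replace (a + b - (c + d)) with ((a - c) + (b - d)) by ring. apply Rabs_triang.
Qed.

Lemma continuous_minus f g : continuous op f -> continuous op g -> continuous op (fun x => f x - g x).
Proof.
  intros; apply (continuous_lipschitz2 f g Rminus); auto. intros a b c d.
  replace (a - b - (c - d)) with ((a - c) + - (b - d)) by ring.
  rewrite <- (Rabs_Ropp (b - d)). apply Rabs_triang.
Qed.

Lemma continuous_min f g : continuous op f -> continuous op g -> continuous op (fun x => Rmin (f x) (g x)).
Proof.
  intros; apply (continuous_lipschitz2 f g Rmin); auto. intros a b c d.
  unfold Rmin; destruct (Rle_dec a b), (Rle_dec c d); unfold Rabs; repeat destruct Rcase_abs; lra.
Qed.

Lemma continuous_max f g : continuous op f -> continuous op g -> continuous op (fun x => Rmax (f x) (g x)).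
Proof.
  intros; apply (continuous_lipschitz2 f g Rmax); auto. intros a b c d.
  unfold Rmax; destruct (Rle_dec a b), (Rle_dec c d); unfold Rabs; repeat destruct Rcase_abs; lra.
Qed.

Lemma continuous_abs f : continuous op f -> continuous op (fun x => Rabs (f x)).
Proof.
  intros Hf. apply (continuous_lipschitz2 f f (fun a _ => Rabs a)); auto.
  intros a b c d. pose proof (Rabs_triang_inv a c). pose proof (Rabs_triang_inv c a).
  rewrite (Rabs_minus_sym c a) in H0. pose proof (Rabs_pos (b - d)).
  unfold Rabs at 1; destruct Rcase_abs; lra.
Qed.

Lemma continuous_scal (c : R) f : continuous op f -> continuous op (fun x => c * f x).
Proof.
  intros Hf. apply continuous_of_local. intros x eps He.
  assert (Hc : 0 < Rabs c + 1) by (pose proof (Rabs_pos c); lra).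
  destruct (continuous_local f Hf x (eps / (Rabs c + 1))) as [W [oW [Wx HW]]].
  { apply Rdiv_lt_0_compat; lra. }
  exists W. split; [|split]; auto. intros y Wy. specialize (HW y Wy).
  replace (c * f y - c * f x) with (c * (f y - f x)) by ring. rewrite Rabs_mult.
  pose proof (Rabs_pos c). pose proof (Rabs_pos (f y - f x)).
  apply Rle_lt_trans with ((Rabs c + 1) * Rabs (f y - f x)); [nra|].
  apply Rmult_lt_reg_l with (/ (Rabs c + 1)); [apply Rinv_0_lt_compat; lra|].
  rewrite <- Rmult_assoc, Rinv_l by lra. unfold Rdiv in HW. lra.
Qed.

Definition tent (h : X -> R) (y : X) : R := Rmax 0 (1 - h y).

Lemma continuous_tent h : continuous op h -> continuous op (tent h).
Proof.
  intros Hh. apply continuous_max; [apply continuous_const|].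
  apply continuous_minus; [apply continuous_const|exact Hh].
Qed.

Lemma tent_eq1 h y : h y = 0 -> tent h y = 1.
Proof. intros E. unfold tent. rewrite E. unfold Rmax; destruct Rle_dec; lra. Qed.

Lemma tent_eq0 h y : 1 <= h y -> tent h y = 0.
Proof. intros E. unfold tent. unfold Rmax; destruct Rle_dec; lra. Qed.

Lemma compact_finite_subcover {I : Type} (U : I -> X -> Prop) :
  compact_space op -> (forall i, op (U i)) -> (forall x, exists i, U i x) ->
  exists l : list I, forall x, exists i, In i l /\ U i x.
Proof.
  intros Hc oU Hcov.
  destruct (Hc (fun V => exists i, V = U i)) as [lV [HlV HcovV]].
  - intros V [i ->]. apply oU.
  - intros x. destruct (Hcov x) as [i Hi]. exists (U i). split; [exists i|]; auto.
  - destruct (list_choice (fun i V => V = U i) lV) as [li Hli]; [intros V HV; apply HlV; auto|].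
    exists li. intros x. destruct (HcovV x) as [V [IV Vx]].
    destruct (Hli V IV) as [i [Ii ->]]. exists i; auto.
Qed.

Lemma list_nat_bound (l : list nat) : exists N, forall n, In n l -> (n <= N)%nat.
Proof.
  induction l as [|a l [N HN]].
  - exists 0%nat. intros n [].
  - exists (max a N). intros n [<-|Hn]; [lia|]. specialize (HN n Hn). lia.
Qed.

Lemma compact_bounded (f : X -> R) :
  compact_space op -> continuous op f -> exists M, forall x, Rabs (f x) <= M.
Proof.
  intros Hc Hf.
  destruct (compact_finite_subcover (fun (n : nat) x => Rabs (f x - 0) < INR n)) as [l Hl]; auto.
  - intros n. apply open_Rabs_lt; auto.
  - intros x. apply nat_above.
  - destruct (list_nat_bound l) as [N HN]. exists (INR N). intros x.
    destruct (Hl x) as [n [In' Hn]]. rewrite Rminus_0_r in Hn.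
    pose proof (le_INR _ _ (HN n In')). lra.
Qed.

End Topology.

(* The uniform-distance form of aleph_0-boundedness of [C_u(X)]. *)
Definition Cu_narrow {X : Type} (op : (X -> Prop) -> Prop) : Prop :=
  forall eps, 0 < eps -> exists A : CX op -> Prop, countable A /\
    forall h : CX op, exists a, A a /\ forall x, Rabs (proj1_sig h x - proj1_sig a x) < eps.

Fixpoint psum (c : nat -> R) (N : nat) : R :=
  match N with O => 0 | S k => psum c k + c k end.

Lemma psum_stable c N M : (forall n, (N <= n)%nat -> c n = 0) -> (N <= M)%nat -> psum c M = psum c N.
Proof. intros H HM. induction HM; auto. simpl. rewrite IHHM, H; [ring|lia]. Qed.

Lemma psum_zero c N : (forall m, (m < N)%nat -> c m = 0) -> psum c N = 0.
Proof. induction N; simpl; auto. intros H. rewrite IHN, H; [ring|lia|intros; apply H; lia]. Qed.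

Section LocallyFiniteSum.
Context {X : Type} (op : (X -> Prop) -> Prop).
Hypothesis Ht : is_topology op.

Definition locally_finite (phi : nat -> X -> R) : Prop :=
  forall y, exists W N, op W /\ W y /\ forall n z, (N <= n)%nat -> W z -> phi n z = 0.

Definition lf_sum (phi : nat -> X -> R) (x : X) : R :=
  epsilon (inhabits 0)
    (fun v => exists N, forall M, (N <= M)%nat -> psum (fun n => phi n x) M = v).

Lemma lf_sum_eq phi x N : (forall n, (N <= n)%nat -> phi n x = 0) ->
  lf_sum phi x = psum (fun n => phi n x) N.
Proof.
  intros H. unfold lf_sum.
  assert (Ex : exists v, exists N, forall M, (N <= M)%nat -> psum (fun n => phi n x) M = v).
  { exists (psum (fun n => phi n x) N). exists N. intros M HM. apply psum_stable; auto. }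
  destruct (epsilon_spec (inhabits 0) _ Ex) as [N' HN'].
  rewrite <- (HN' (max N N')) by lia. apply psum_stable; auto. lia.
Qed.

Lemma continuous_lf_sum phi :
  (forall n, continuous op (phi n)) -> locally_finite phi -> continuous op (lf_sum phi).
Proof.
  intros Hc Hl. apply continuous_of_local; auto. intros x eps He.
  destruct (Hl x) as [W [N [oW [Wx HW]]]].
  assert (HN : forall K, continuous op (fun x => psum (fun n => phi n x) K)).
  { induction K; simpl; [apply continuous_const|apply continuous_plus]; auto. }
  destruct (continuous_local op _ (HN N) x eps He) as [W' [oW' [Wx' HW']]].
  exists (fun y => W y /\ W' y). split; [apply open_inter; auto|split; auto].
  intros y [Wy Wy']. rewrite (lf_sum_eq phi y N), (lf_sum_eq phi x N); auto.
Qed.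

(* Sums over subfamilies give [2^aleph_0] functions at mutual distance [1]. *)
Lemma peaked_family_not_Cu_narrow (phi : nat -> X -> R) (p : nat -> X) :
  (forall n, continuous op (phi n)) -> locally_finite phi ->
  (forall n, phi n (p n) = 1) -> (forall n m, n <> m -> phi m (p n) = 0) -> ~ Cu_narrow op.
Proof.
  intros Hc Hl H1 H0 HQ.
  set (ps := fun (s : nat -> bool) n x => if s n then phi n x else 0).
  assert (Hcs : forall s n, continuous op (ps s n)).
  { intros s n. unfold ps. destruct (s n); auto. apply continuous_const; auto. }
  assert (Hls : forall s, locally_finite (ps s)).
  { intros s y. destruct (Hl y) as [W [N [oW [Wy HW]]]]. exists W, N. split; [|split]; auto.
    intros n z Hn Wz. unfold ps. destruct (s n); auto. }
  set (Phi := fun s => exist _ (lf_sum (ps s)) (continuous_lf_sum _ (Hcs s) (Hls s)) : CX op).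
  assert (Hval : forall s n, proj1_sig (Phi s) (p n) = if s n then 1 else 0).
  { intros s n. assert (Hoff : forall m, m <> n -> ps s m (p n) = 0).
    { intros m Hm. unfold ps. destruct (s m); auto. }
    simpl. rewrite (lf_sum_eq _ _ (S n)) by (intros m Hm; apply Hoff; lia).
    simpl. rewrite psum_zero by (intros m Hm; apply Hoff; lia).
    unfold ps. rewrite H1. destruct (s n); ring. }
  destruct (HQ (1/2)) as [A [HA Hh]]; [lra|].
  set (a := fun s => epsilon (inhabits (Phi s))
              (fun a => A a /\ forall x, Rabs (proj1_sig (Phi s) x - proj1_sig a x) < 1/2)).
  assert (Ha : forall s, A (a s) /\ forall x, Rabs (proj1_sig (Phi s) x - proj1_sig (a s) x) < 1/2).
  { intros s. exact (epsilon_spec (inhabits (Phi s)) _ (Hh (Phi s))). }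
  apply (not_countable_of_bool_seq_injection A a); auto; [intros s; apply Ha|].
  intros s t E. apply functional_extensionality. intros n.
  destruct (Ha s) as [_ Hs]. destruct (Ha t) as [_ Ht']. rewrite E in Hs.
  specialize (Hs (p n)). specialize (Ht' (p n)). rewrite Hval in Hs, Ht'.
  destruct (s n), (t n); auto; exfalso; unfold Rabs in Hs, Ht';
    repeat destruct Rcase_abs; lra.
Qed.

Lemma spread_sequence (g : X -> R) :
  (forall M, exists x, M < g x) -> exists xs : nat -> X, forall n, g (xs n) + 2 < g (xs (S n)).
Proof.
  intros HU. destruct (HU 0) as [x0 _].
  set (next := fun y => epsilon (inhabits x0) (fun z => g y + 2 < g z)).
  exists (fix xs n := match n with O => x0 | S k => next (xs k) end).
  intros n. exact (epsilon_spec (inhabits x0) (fun z => _ + 2 < g z) (HU _)).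
Qed.

Lemma spread_ge (t : nat -> R) : (forall n, t n + 2 < t (S n)) ->
  forall n m, (n <= m)%nat -> t n + 2 * INR (m - n) <= t m.
Proof.
  intros Hstep n m Hnm. induction Hnm.
  - rewrite Nat.sub_diag. simpl. lra.
  - rewrite Nat.sub_succ_l, S_INR by auto. pose proof (Hstep m). lra.
Qed.

(* An unbounded [|f|] yields tents over the disjoint level bands [|f| = t n +- 1]. *)
Lemma Cu_narrow_bounded : Cu_narrow op ->
  forall f, continuous op f -> exists M, forall x, Rabs (f x) <= M.
Proof.
  intros HQ f Hf. apply NNPP. intros NB.
  set (g := fun x => Rabs (f x)).
  assert (Hg : continuous op g) by (apply continuous_abs; auto).
  assert (HU : forall M, exists x, M < g x).
  { intros M. apply NNPP. intros NE. apply NB. exists M. intros x.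
    apply Rnot_gt_le. intros G. apply NE. exists x; auto. }
  destruct (spread_sequence g HU) as [xs Hxs].
  set (t := fun n => g (xs n)).
  assert (Hsep : forall n m, n <> m -> 2 <= Rabs (g (xs n) - t m)).
  { intros n m Hnm. fold (t n).
    destruct (proj1 (Nat.lt_gt_cases n m) Hnm) as [L|L].
    - pose proof (spread_ge t Hxs n m ltac:(lia)). pose proof (le_INR 1 (m - n) ltac:(lia)).
      simpl in *. unfold Rabs; destruct Rcase_abs; lra.
    - pose proof (spread_ge t Hxs m n ltac:(lia)). pose proof (le_INR 1 (n - m) ltac:(lia)).
      simpl in *. unfold Rabs; destruct Rcase_abs; lra. }
  apply (peaked_family_not_Cu_narrow (fun n => tent (fun y => Rabs (g y - t n))) xs); auto.
  - intros n. apply continuous_tent, continuous_abs, continuous_minus; auto. apply continuous_const; auto.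
  - intros y. destruct (nat_above (g y + 2 - t 0%nat)) as [N HN].
    exists (fun z => g z < g y + 1), N. split; [|split; [lra|]].
    + apply (Hg (fun r => r < g y + 1)). intros r Hr. exists (g y + 1 - r). split; [lra|].
      intros z Hz. unfold Rabs in Hz; destruct Rcase_abs; lra.
    + intros n z Hn Hz. apply tent_eq0. pose proof (spread_ge t Hxs 0 n ltac:(lia)).
      rewrite Nat.sub_0_r in H. apply le_INR in Hn. pose proof (pos_INR n).
      rewrite Rabs_minus_sym, Rabs_right; lra.
  - intros n. apply tent_eq1. unfold t. unfold Rminus. rewrite Rplus_opp_r. apply Rabs_R0.
  - intros n m Hnm. apply tent_eq0. pose proof (Hsep n m Hnm). lra.
Qed.

End LocallyFiniteSum.

Lemma inv_close a b eps : 0 < b -> 0 < eps -> Rabs (a - b) < Rmin (b / 2) (eps * b * b / 2) ->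
  Rabs (/ a - / b) < eps.
Proof.
  intros Hb He H.
  pose proof (Rmin_l (b/2) (eps*b*b/2)). pose proof (Rmin_r (b/2) (eps*b*b/2)).
  assert (Ha : b / 2 < a) by (unfold Rabs in H; destruct Rcase_abs in H; lra).
  replace (/ a - / b) with ((b - a) / (a * b)) by (field; lra).
  unfold Rdiv. rewrite Rabs_mult, Rabs_minus_sym, Rabs_inv, (Rabs_right (a * b)) by nra.
  apply Rmult_lt_reg_r with (a * b); [nra|].
  rewrite Rmult_assoc, Rinv_l by nra.
  assert (0 < eps * b * (a - b/2)) by (apply Rmult_lt_0_compat; [apply Rmult_lt_0_compat|]; lra).
  nra.
Qed.

Lemma continuous_inv {X : Type} (op : (X -> Prop) -> Prop) (f : X -> R) :
  is_topology op -> continuous op f -> (forall x, 0 < f x) -> continuous op (fun x => / f x).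
Proof.
  intros Ht Hf Hpos. apply continuous_of_local; auto. intros x eps He.
  assert (Hm : 0 < Rmin (f x / 2) (eps * f x * f x / 2)).
  { pose proof (Hpos x). apply Rmin_glb_lt; [lra|].
    apply Rdiv_lt_0_compat; [|lra]. apply Rmult_lt_0_compat; [apply Rmult_lt_0_compat|]; lra. }
  destruct (continuous_local op f Hf x _ Hm) as [W [oW [Wx HW]]].
  exists W. split; [|split]; auto. intros y Wy. apply inv_close; auto.
Qed.

Definition sup01_set (E : R -> Prop) (t : R) : Prop := t = 0 \/ (E t /\ 0 <= t <= 1).

Lemma sup01_set_bound E : bound (sup01_set E).
Proof. exists 1. intros t [->|[_ H]]; lra. Qed.

(* The supremum of [E] restricted to [[0, 1]], with [0] adjoined so that it always exists. *)
Definition sup01 (E : R -> Prop) : R :=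
  proj1_sig (completeness (sup01_set E) (sup01_set_bound E) (ex_intro _ 0 (or_introl eq_refl))).

Lemma sup01_lub E : is_lub (sup01_set E) (sup01 E).
Proof. unfold sup01. destruct completeness; auto. Qed.

Lemma sup01_ub E t : E t -> 0 <= t <= 1 -> t <= sup01 E.
Proof. intros H1 H2. apply (proj1 (sup01_lub E)). right; auto. Qed.

Lemma sup01_ge0 E : 0 <= sup01 E.
Proof. apply (proj1 (sup01_lub E)). left; auto. Qed.

Lemma sup01_le E B : 0 <= B -> (forall t, E t -> 0 <= t <= 1 -> t <= B) -> sup01 E <= B.
Proof. intros HB H. apply (proj2 (sup01_lub E)). intros t [->|[H1 H2]]; auto. Qed.

Lemma sup01_approx E eta : 0 < eta -> 0 < sup01 E ->
  exists t, E t /\ 0 <= t <= 1 /\ sup01 E - eta < t.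
Proof.
  intros He Hs. apply NNPP. intros NE.
  assert (sup01 E <= Rmax 0 (sup01 E - eta)).
  { apply sup01_le; [apply Rmax_l|]. intros t Et Ht.
    apply Rnot_lt_le. intros L. apply NE. exists t. split; [|split]; auto.
    pose proof (Rmax_r 0 (sup01 E - eta)). lra. }
  unfold Rmax in H; destruct Rle_dec in H; lra.
Qed.

Section Metric.
Context {X : Type} (op : (X -> Prop) -> Prop) (d : X -> X -> R).
Hypothesis Ht : is_topology op.
Hypotheses (dpos : forall x y, 0 <= d x y) (deq : forall x y, d x y = 0 <-> x = y)
  (dsym : forall x y, d x y = d y x) (dtri : forall x y z, d x z <= d x y + d y z)
  (dop : forall U, op U <-> (forall x, U x -> exists eps, 0 < eps /\ forall y, d x y < eps -> U y)).

Lemma dist_refl x : d x x = 0.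
Proof. apply deq; auto. Qed.

Lemma ball_open x r : op (fun y => d x y < r).
Proof.
  apply dop. intros y Hy. exists (r - d x y). split; [lra|].
  intros z Hz. pose proof (dtri x y z). lra.
Qed.

Lemma open_contains_ball U x : op U -> U x -> exists eps, 0 < eps /\ forall y, d x y < eps -> U y.
Proof. intros oU Ux. apply (proj1 (dop U) oU); auto. Qed.

Lemma continuous_of_lipschitz (f : X -> R) (L : R) :
  0 <= L -> (forall x y, Rabs (f x - f y) <= L * d x y) -> continuous op f.
Proof.
  intros HL Hf. apply continuous_of_local; auto. intros x eps He.
  exists (fun y => d x y < eps / (L + 1)). split; [apply ball_open|split].
  - rewrite dist_refl. apply Rdiv_lt_0_compat; lra.
  - intros y Hy. rewrite Rabs_minus_sym. eapply Rle_lt_trans; [apply Hf|].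
    apply Rle_lt_trans with ((L+1) * d x y); [pose proof (dpos x y); nra|].
    apply Rmult_lt_reg_l with (/ (L+1)); [apply Rinv_0_lt_compat; lra|].
    rewrite <- Rmult_assoc, Rinv_l by lra. unfold Rdiv in Hy. lra.
Qed.

Lemma continuous_dist p : continuous op (fun y => d p y).
Proof.
  apply (continuous_of_lipschitz _ 1); [lra|]. intros x y.
  pose proof (dtri p x y). pose proof (dtri p y x). rewrite (dsym y x) in H0.
  unfold Rabs; destruct Rcase_abs; lra.
Qed.

Lemma separated_seq_not_Cu_narrow (delta : R) (pts : nat -> X) :
  0 < delta -> (forall m n, m <> n -> delta <= d (pts m) (pts n)) -> ~ Cu_narrow op.
Proof.
  intros Hdel Hsep.
  set (h := fun n y => 4 / delta * d (pts n) y).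
  assert (Hfar : forall n z, delta / 4 <= d (pts n) z -> tent (h n) z = 0).
  { intros n z Hz. apply tent_eq0. unfold h.
    apply Rmult_le_reg_r with (delta / 4); [lra|].
    replace (4 / delta * d (pts n) z * (delta / 4)) with (d (pts n) z) by (field; lra). lra. }
  apply (peaked_family_not_Cu_narrow op Ht (fun n => tent (h n)) pts).
  - intros n. apply continuous_tent, continuous_scal, continuous_dist; auto.
  - intros y. exists (fun z => d y z < delta / 4).
    assert (Hz : forall m z, d y z < delta / 4 -> delta / 2 <= d (pts m) y -> tent (h m) z = 0).
    { intros m z Hz Hm. apply Hfar. pose proof (dtri (pts m) z y). rewrite (dsym z y) in H. lra. }
    destruct (classic (exists n, d (pts n) y < delta / 2)) as [[n Hn]|NE].
    + exists (S n). split; [apply ball_open|split; [rewrite dist_refl; lra|]].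
      intros m z Hm Hzz. apply Hz; auto. pose proof (Hsep m n ltac:(lia)).
      pose proof (dtri (pts m) y (pts n)). rewrite (dsym y (pts n)) in H0. lra.
    + exists 0%nat. split; [apply ball_open|split; [rewrite dist_refl; lra|]].
      intros m z _ Hzz. apply Hz; auto. apply Rnot_lt_le. intros Lt. apply NE. exists m; auto.
  - intros n. apply tent_eq1. unfold h. rewrite dist_refl. ring.
  - intros n m Hnm. apply Hfar. pose proof (Hsep m n ltac:(lia)). lra.
Qed.

Section LebesgueNumber.
Variable F : (X -> Prop) -> Prop.
Hypotheses (HF : forall U, F U -> op U) (Hcov : forall x, exists U, F U /\ U x).

Definition cover_radius (x : X) : R :=
  sup01 (fun t => exists U, F U /\ forall y, d x y < t -> U y).

Lemma cover_radius_pos x : 0 < cover_radius x.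
Proof.
  destruct (Hcov x) as [U [FU Ux]].
  destruct (open_contains_ball U x (HF U FU) Ux) as [e [He HU]].
  pose proof (Rmin_l e 1). pose proof (Rmin_r e 1).
  apply Rlt_le_trans with (Rmin e 1); [apply Rmin_glb_lt; lra|].
  apply sup01_ub; [|split; [apply Rmin_glb|]; lra].
  exists U. split; auto. intros y Hy. apply HU. lra.
Qed.

Lemma cover_radius_lipschitz x y : cover_radius x <= cover_radius y + d x y.
Proof.
  apply Rnot_lt_le. intros L. pose proof (sup01_ge0 (fun t => exists U, F U /\ forall z, d y z < t -> U z)).
  fold (cover_radius y) in H.
  destruct (sup01_approx (fun t => exists U, F U /\ forall z, d x z < t -> U z)
              ((cover_radius x - (cover_radius y + d x y)) / 2))
    as [t [[U [FU HU]] [Ht01 Htg]]]; [lra|apply cover_radius_pos|].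
  fold (cover_radius x) in Htg.
  assert (t - d x y <= cover_radius y).
  { apply sup01_ub; [|pose proof (dpos x y); lra].
    exists U. split; auto. intros z Hz. apply HU. pose proof (dtri x y z). lra. }
  lra.
Qed.

Lemma Cu_narrow_lebesgue_number : Cu_narrow op ->
  exists delta, 0 < delta /\ forall x, exists U, F U /\ forall y, d x y < delta -> U y.
Proof.
  intros HQ.
  assert (Hc : continuous op (fun x => / cover_radius x)).
  { apply continuous_inv; auto; [|apply cover_radius_pos].
    apply (continuous_of_lipschitz _ 1); [lra|]. intros x y.
    pose proof (cover_radius_lipschitz x y). pose proof (cover_radius_lipschitz y x).
    rewrite dsym in H0. unfold Rabs; destruct Rcase_abs; lra. }
  destruct (Cu_narrow_bounded op Ht HQ _ Hc) as [M HM].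
  assert (HM1 : 0 < Rabs M + 1) by (pose proof (Rabs_pos M); lra).
  exists (/ (Rabs M + 1)). split; [apply Rinv_0_lt_compat; auto|]. intros x.
  pose proof (cover_radius_pos x) as Hr.
  assert (Hbig : / (Rabs M + 1) < cover_radius x).
  { rewrite <- (Rinv_inv (cover_radius x)). apply Rinv_lt_contravar.
    - apply Rmult_lt_0_compat; [apply Rinv_0_lt_compat|]; lra.
    - pose proof (HM x). pose proof (Rle_abs M).
      rewrite Rabs_right in H by (apply Rle_ge, Rlt_le, Rinv_0_lt_compat; auto). lra. }
  destruct (sup01_approx (fun t => exists U, F U /\ forall z, d x z < t -> U z)
              (cover_radius x - / (Rabs M + 1))) as [t [[U [FU HU]] [_ Htg]]];
    [lra|apply Hr|].
  exists U. split; auto. intros y Hy. apply HU. fold (cover_radius x) in Htg. lra.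
Qed.

(* Greedily pick a point outside the balls of the points already chosen. *)
Lemma separated_seq_of_no_finite_subcover (delta : R) :
  (forall x, exists U, F U /\ forall y, d x y < delta -> U y) ->
  ~ (exists l, (forall U, In U l -> F U) /\ forall x, exists U, In U l /\ U x) ->
  exists pts : nat -> X, forall m n, m <> n -> delta <= d (pts m) (pts n).
Proof.
  intros HUof NC.
  assert (Hne : inhabited X).
  { apply NNPP. intros NE. apply NC. exists nil. split; [intros U []|].
    intros x. exfalso. apply NE. constructor; auto. }
  set (Uof := fun x => epsilon (inhabits (fun _ : X => True))
                 (fun U => F U /\ forall y, d x y < delta -> U y)).
  assert (HUof' : forall x, F (Uof x) /\ forall y, d x y < delta -> Uof x y).
  { intros x. exact (epsilon_spec _ _ (HUof x)). }
  set (pick := fun l => epsilon Hne (fun y => forall p, In p l -> ~ Uof p y)).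
  assert (Hpick : forall l p, In p l -> ~ Uof p (pick l)).
  { intros l. apply (epsilon_spec Hne (fun y => forall p, In p l -> ~ Uof p y)).
    apply NNPP. intros NE. apply NC. exists (map Uof l). split.
    - intros U HU. apply in_map_iff in HU. destruct HU as [p [<- _]]. apply HUof'.
    - intros y. apply NNPP. intros NY. apply NE. exists y. intros p Hp Up. apply NY.
      exists (Uof p). split; auto. apply in_map; auto. }
  set (L := fix L n := match n with O => nil | S k => pick (L k) :: L k end).
  exists (fun n => pick (L n)).
  assert (HinL : forall m n, (m < n)%nat -> In (pick (L m)) (L n)).
  { intros m n Hmn. induction Hmn; simpl; auto. }
  assert (G : forall m n, (m < n)%nat -> delta <= d (pick (L m)) (pick (L n))).
  { intros m n Hmn. apply Rnot_lt_le. intros Lt.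
    apply (Hpick (L n) (pick (L m)) (HinL m n Hmn)). apply HUof'. auto. }
  intros m n Hmn. destruct (proj1 (Nat.lt_gt_cases m n) Hmn) as [H|H]; auto.
  rewrite dsym. apply G; auto.
Qed.

End LebesgueNumber.

Lemma Cu_narrow_metric_compact : Cu_narrow op -> compact_space op.
Proof.
  intros HQ F HF Hcov. apply NNPP. intros NC.
  destruct (Cu_narrow_lebesgue_number F HF Hcov HQ) as [delta [Hdel HUof]].
  destruct (separated_seq_of_no_finite_subcover F delta HUof NC) as [pts Hsep].
  exact (separated_seq_not_Cu_narrow delta pts Hdel Hsep HQ).
Qed.

End Metric.

Definition Cu_dense_seq {X : Type} {op : (X -> Prop) -> Prop} (D : nat -> CX op) : Prop :=
  forall (h : CX op) eps, 0 < eps ->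
    exists n, forall x, Rabs (proj1_sig h x - proj1_sig (D n) x) < eps.

Definition zeroC {X : Type} (op : (X -> Prop) -> Prop) (Ht : is_topology op) : CX op :=
  exist _ (fun _ => 0) (continuous_const op Ht 0).

(* Enumerate [1/(k+1)]-nets for all [k] along the pairing [of_nat]. *)
Lemma Cu_narrow_dense_seq {X : Type} (op : (X -> Prop) -> Prop) :
  is_topology op -> Cu_narrow op -> exists D : nat -> CX op, Cu_dense_seq D.
Proof.
  intros Ht HQ. set (z0 := zeroC op Ht).
  set (P := fun k (g : nat -> CX op) => forall h : CX op, exists n, forall x,
        Rabs (proj1_sig h x - proj1_sig (g n) x) < / (INR k + 1)).
  assert (HP : forall k, exists g, P k g).
  { intros k. destruct (HQ (/ (INR k + 1)) (inv_succ_pos k)) as [A [HA Hh]].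
    destruct (Hh z0) as [a0 [Aa0 _]].
    destruct (countable_enumeration A a0 Aa0 HA) as [g [_ Hg]].
    exists g. intros h. destruct (Hh h) as [a [Aa Ha]]. destruct (Hg a Aa) as [n <-].
    exists n; auto. }
  set (G := fun k => epsilon (inhabits (fun _ : nat => z0)) (P k)).
  exists (fun m => G (fst (of_nat m)) (snd (of_nat m))).
  intros h eps He. destruct (inv_succ_small eps He) as [k Hk].
  destruct (epsilon_spec (inhabits (fun _ : nat => z0)) (P k) (HP k) h) as [n Hn].
  destruct (of_nat_surj k n) as [m Hm]. exists m. rewrite Hm. simpl.
  intros x. specialize (Hn x). fold (G k) in Hn. lra.
Qed.

Section DenseSeqMetric.
Context {X : Type} (op : (X -> Prop) -> Prop) (D : nat -> CX op).
Hypotheses (HX : tychonoff op) (HD : Cu_dense_seq D).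

Definition dense_term n x y := Rmin (/ (INR n + 1)) (Rabs (proj1_sig (D n) x - proj1_sig (D n) y)).

Definition dense_dist x y := sup01 (fun t => exists n, t = dense_term n x y).

Lemma dense_term_01 n x y : 0 <= dense_term n x y <= 1.
Proof.
  unfold dense_term. pose proof (inv_succ_pos n). pose proof (inv_succ_le 0 n ltac:(lia)).
  pose proof (Rabs_pos (proj1_sig (D n) x - proj1_sig (D n) y)).
  pose proof (Rmin_l (/ (INR n + 1)) (Rabs (proj1_sig (D n) x - proj1_sig (D n) y))).
  simpl in *. rewrite Rplus_0_l, Rinv_1 in *. split; [apply Rmin_glb|]; lra.
Qed.

Lemma dense_term_le_dist n x y : dense_term n x y <= dense_dist x y.
Proof. apply sup01_ub; [exists n; auto|apply dense_term_01]. Qed.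

Lemma dense_dist_le x y B : 0 <= B -> (forall n, dense_term n x y <= B) -> dense_dist x y <= B.
Proof. intros HB H. apply sup01_le; auto. intros t [n ->] _. auto. Qed.

Lemma dense_term_sym n x y : dense_term n x y = dense_term n y x.
Proof. unfold dense_term. rewrite Rabs_minus_sym. auto. Qed.

Lemma dense_term_triangle n x y z : dense_term n x z <= dense_term n x y + dense_term n y z.
Proof.
  unfold dense_term. pose proof (inv_succ_pos n). set (a := / (INR n + 1)) in *.
  set (p := proj1_sig (D n) x). set (q := proj1_sig (D n) y). set (s := proj1_sig (D n) z).
  pose proof (Rabs_triang (p - q) (q - s)). replace (p - q + (q - s)) with (p - s) in H0 by ring.
  pose proof (Rabs_pos (p - q)). pose proof (Rabs_pos (q - s)).
  unfold Rmin. repeat destruct Rle_dec; lra.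
Qed.

(* A function approximating an Urysohn function for [x] and [~ U] separates them. *)
Lemma dense_term_small_open (x : X) (U : X -> Prop) : op U -> U x ->
  exists n, forall y, dense_term n x y < Rmin (/ (INR n + 1)) (1/3) -> U y.
Proof.
  intros oU Ux. destruct HX as [Ht [HT1 HCR]].
  assert (Hc : closed op (fun z => ~ U z)).
  { unfold closed. replace (fun z => ~ ~ U z) with U; auto.
    apply pred_ext. intros z; split; auto. apply NNPP. }
  destruct (HCR _ x Hc ltac:(auto)) as [f [Hf [Hf0 Hf1]]].
  destruct (HD (exist _ f Hf) (1/3)) as [n Hn]; [lra|]. simpl in Hn.
  exists n. intros y Hy. apply NNPP. intros NU. specialize (Hf1 y NU).
  pose proof (Hn x) as Hx. pose proof (Hn y) as Hy'. rewrite Hf0 in Hx. rewrite Hf1 in Hy'.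
  assert (Rabs (proj1_sig (D n) x - proj1_sig (D n) y) >= 1/3).
  { unfold Rabs in *; repeat destruct Rcase_abs; lra. }
  unfold dense_term in Hy. unfold Rmin at 1 in Hy. unfold Rmin in Hy.
  repeat destruct Rle_dec; lra.
Qed.

Lemma dense_dist_ball_open (x : X) (r : R) : 0 < r ->
  exists W, op W /\ W x /\ forall y, W y -> dense_dist x y < r.
Proof.
  intros Hr. destruct HX as [Ht _]. destruct (inv_succ_small r Hr) as [N HN].
  exists (fun y => forall n, (n < N)%nat -> Rabs (proj1_sig (D n) y - proj1_sig (D n) x) < r / 2).
  split; [apply open_forall_lt; auto; intros n; apply open_Rabs_lt, (proj2_sig (D n))|split].
  - intros n _. unfold Rminus; rewrite Rplus_opp_r, Rabs_R0; lra.
  - intros y Wy. pose proof (inv_succ_pos N).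
    apply Rle_lt_trans with (Rmax (r / 2) (/ (INR N + 1))); [|apply Rmax_lub_lt; lra].
    apply dense_dist_le; [pose proof (Rmax_l (r/2) (/ (INR N + 1))); lra|].
    intros n. unfold dense_term. pose proof (Rmax_l (r / 2) (/ (INR N + 1))).
    pose proof (Rmax_r (r / 2) (/ (INR N + 1))).
    destruct (Nat.lt_ge_cases n N) as [L|L].
    + rewrite Rabs_minus_sym. pose proof (Wy n L).
      pose proof (Rmin_r (/ (INR n + 1)) (Rabs (proj1_sig (D n) y - proj1_sig (D n) x))). lra.
    + pose proof (Rmin_l (/ (INR n + 1)) (Rabs (proj1_sig (D n) x - proj1_sig (D n) y))).
      pose proof (inv_succ_le N n L). lra.
Qed.

Lemma dense_seq_metrizable : metrizable op.
Proof.
  destruct HX as [Ht [HT1 HCR]].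
  assert (Hrad : forall n, 0 < Rmin (/ (INR n + 1)) (1/3))
    by (intros n; pose proof (inv_succ_pos n); apply Rmin_glb_lt; lra).
  exists dense_dist. split; [|split; [|split; [|split]]].
  - intros x y. apply sup01_ge0.
  - intros x y. split.
    + intros H0. apply NNPP. intros Nxy.
      destruct (dense_term_small_open x (fun z => ~ z = y) (HT1 y) Nxy) as [n Hn].
      pose proof (dense_term_le_dist n x y). pose proof (Hrad n).
      apply (Hn y); auto. lra.
    + intros ->. apply Rle_antisym; [|apply sup01_ge0]. apply dense_dist_le; [lra|].
      intros n. unfold dense_term. unfold Rminus. rewrite Rplus_opp_r, Rabs_R0. apply Rmin_r.
  - intros x y. apply Rle_antisym; apply dense_dist_le; try apply sup01_ge0; intros n;
      rewrite dense_term_sym; apply dense_term_le_dist.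
  - intros x y z. pose proof (sup01_ge0 (fun t => exists n, t = dense_term n x y)).
    pose proof (sup01_ge0 (fun t => exists n, t = dense_term n y z)).
    apply dense_dist_le; [unfold dense_dist; lra|]. intros n.
    pose proof (dense_term_triangle n x y z).
    pose proof (dense_term_le_dist n x y). pose proof (dense_term_le_dist n y z). lra.
  - intros U. split.
    + intros oU x Ux. destruct (dense_term_small_open x U oU Ux) as [n Hn].
      exists (Rmin (/ (INR n + 1)) (1/3)). split; auto.
      intros y Hy. apply Hn. pose proof (dense_term_le_dist n x y). lra.
    + intros H. apply open_of_local; auto. intros x Ux.
      destruct (H x Ux) as [r [Hr Hball]].
      destruct (dense_dist_ball_open x r Hr) as [W [oW [Wx HW]]].
      exists W. auto.
Qed.

End DenseSeqMetric.

Lemma Cu_narrow_compact_metrizable {X : Type} (op : (X -> Prop) -> Prop) :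
  tychonoff op -> Cu_narrow op -> compact_space op /\ metrizable op.
Proof.
  intros HX HQ. pose proof HX as [Ht _].
  destruct (Cu_narrow_dense_seq op Ht HQ) as [D HD].
  pose proof (dense_seq_metrizable op D HX HD) as HM. split; auto.
  destruct HM as [d [d1 [d2 [d3 [d4 d5]]]]].
  exact (Cu_narrow_metric_compact op d Ht d1 d2 d3 d4 d5 HQ).
Qed.

Lemma zorn_sets {T : Type} (P : (T -> Prop) -> Prop) :
  (forall F : (T -> Prop) -> Prop, (forall A, F A -> P A) ->
     (forall A B, F A -> F B -> Subset A B \/ Subset B A) -> P (fun x => exists A, F A /\ A x)) ->
  exists A, P A /\ forall B, Subset A B -> P B -> Subset B A.
Proof.
  intros H.
  destruct (@classical_sets.Zorn_bigcup T P) as [A [PA HA]].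
  - intros F HF Htot.
    replace (classical_sets.bigcup F (fun X => X)) with (fun x => exists A, F A /\ A x).
    + apply H; [intros A FA; apply HF; exact FA|].
      intros A B FA FB. destruct (Htot A B FA FB) as [h|h]; [left|right]; intros x; apply h.
    + apply pred_ext. intros x. split.
      * intros [A [FA Ax]]. exists A; assumption.
      * intros [A FA Ax]. exists A; split; assumption.
  - exists A. split; [exact PA|]. intros B AB PB x Bx. apply NNPP. intros NAx.
    apply (HA B); [|exact PB]. split.
    + intros y Ay. apply AB. exact Ay.
    + intros E. apply NAx. apply E. exact Bx.
Qed.

Section SpaceProperties.
Context {T : Type} (opT : (T -> Prop) -> Prop).

Lemma second_countable_countable_network : second_countable opT -> countable_network opT.
Proof. intros [B [HB [_ H]]]. exists B. split; auto. Qed.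

Lemma countable_network_separable (t0 : T) : countable_network opT -> separable opT.
Proof.
  intros [N [HN HNet]].
  set (pick := fun V : T -> Prop => epsilon (inhabits t0) V).
  exists (fun y => exists V, N V /\ y = pick V). split; [apply countable_image; auto|].
  intros U oU [x Ux]. destruct (HNet U x oU Ux) as [V [NV [Vx VU]]].
  exists (pick V). split; [|exists V; auto].
  apply VU. apply (epsilon_spec (inhabits t0) V). exists x; auto.
Qed.

Lemma second_countable_lindelof : second_countable opT -> lindelof opT.
Proof.
  intros [B [[c Hc] [HB Hbase]]] F HF Hcov.
  set (Sb := fun V => B V /\ exists U, F U /\ Subset V U).
  set (ch := fun V => epsilon (inhabits (fun _ : T => True)) (fun U => F U /\ Subset V U)).
  assert (Hch : forall V, Sb V -> F (ch V) /\ Subset V (ch V))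
    by (intros V [_ HV]; exact (epsilon_spec _ (fun U => F U /\ Subset V U) HV)).
  exists (fun W => exists V, Sb V /\ W = ch V). split; [|split].
  - apply countable_image. exists c. intros a b [Ba _] [Bb _]. apply Hc; auto.
  - intros W [V [SV ->]]. apply Hch; auto.
  - intros x. destruct (Hcov x) as [U [FU Ux]].
    destruct (Hbase U x (HF U FU) Ux) as [V [BV [Vx VU]]].
    assert (SV : Sb V) by (split; auto; exists U; auto).
    exists (ch V). split; [exists V; auto|]. apply Hch; auto.
Qed.

End SpaceProperties.

Section FunctionSpace.
Context {X : Type} (op : (X -> Prop) -> Prop).
Hypothesis Ht : is_topology op.

(* Open sup-ball: some slack [dl] below the radius, so that it is [Cu]-open. *)
Definition sup_ball (f : CX op) (r : R) (g : CX op) : Prop :=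
  exists dl, 0 < dl /\ forall x, Rabs (proj1_sig g x - proj1_sig f x) < r - dl.

Lemma sup_ball_Cu_open f r : Cu_open op (sup_ball f r).
Proof.
  intros g [dl [Hdl Hg]]. exists (dl / 2). split; [lra|]. intros g' Hg'.
  exists (dl / 2). split; [lra|]. intros x. specialize (Hg x). specialize (Hg' x).
  pose proof (Rabs_triang (proj1_sig g' x - proj1_sig g x) (proj1_sig g x - proj1_sig f x)).
  replace (proj1_sig g' x - proj1_sig g x + (proj1_sig g x - proj1_sig f x)) with
    (proj1_sig g' x - proj1_sig f x) in H by ring. lra.
Qed.

Lemma sup_ball_center f r : 0 < r -> sup_ball f r f.
Proof.
  intros Hr. exists (r / 2). split; [lra|]. intros x.
  unfold Rminus. rewrite Rplus_opp_r, Rabs_R0. lra.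
Qed.

Lemma sup_ball_lt f r g : sup_ball f r g -> forall x, Rabs (proj1_sig g x - proj1_sig f x) < r.
Proof. intros [dl [Hdl H]] x. specialize (H x). lra. Qed.

Lemma Cu_open_Cm_open W : Cu_open op W -> Cm_open op W.
Proof.
  intros H f Wf. destruct (H f Wf) as [e [He Hg]].
  exists (fun _ => e). split; [apply continuous_const; auto|split; auto].
Qed.

Lemma Cm_open_Cgamma_open W : Cm_open op W -> Cgamma_open op W.
Proof.
  intros H f Wf. destruct (H f Wf) as [e [He [Hp Hg]]].
  exists e. split; [|split; auto]. intros r. apply (He (fun t => r < t)).
  intros t Hrt. exists (t - r). split; [lra|].
  intros y Hy. unfold Rabs in Hy; destruct Rcase_abs in Hy; lra.
Qed.

Lemma Cu_open_Cgamma_open W : Cu_open op W -> Cgamma_open op W.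
Proof. intros; apply Cm_open_Cgamma_open, Cu_open_Cm_open; auto. Qed.

Lemma compact_Cgamma_open_Cu_open W : compact_space op -> Cgamma_open op W -> Cu_open op W.
Proof.
  intros Hc HW f Wf. destruct (HW f Wf) as [eta [Hl [Hp Hg]]].
  destruct (compact_finite_subcover op (fun (n : nat) x => / (INR n + 1) < eta x))
    as [l Hl']; auto.
  { intros x. apply inv_succ_small, Hp. }
  destruct (list_nat_bound l) as [N HN].
  exists (/ (INR N + 1)). split; [apply inv_succ_pos|].
  intros g Hg'. apply Hg. intros x. specialize (Hg' x).
  destruct (Hl' x) as [n [In' Hn]]. pose proof (inv_succ_le n N (HN n In')). lra.
Qed.

Section FinerThanCu.
Variable opC : (CX op -> Prop) -> Prop.
Hypothesis HCu : forall W, Cu_open op W -> opC W.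

Lemma separable_Cu_narrow : separable opC -> Cu_narrow op.
Proof.
  intros [D [HD Hd]] eps He. exists D. split; auto. intros h.
  destruct (Hd (sup_ball h eps)) as [a [Ba Da]];
    [apply HCu, sup_ball_Cu_open|exists h; apply sup_ball_center; auto|].
  exists a. split; auto. intros x. rewrite Rabs_minus_sym. apply (sup_ball_lt h eps a Ba).
Qed.

Lemma aleph0_bounded_Cu_narrow : aleph0_bounded_C op opC -> Cu_narrow op.
Proof.
  intros H eps He. set (z := zeroC op Ht).
  destruct (H (sup_ball z eps)) as [A [HA Hh]].
  { exists (sup_ball z eps). split; [apply HCu, sup_ball_Cu_open|split; [intros g; auto|]].
    intros z' Hz. exists (eps / 2). split; [lra|]. intros x. simpl. rewrite Hz.
    unfold Rminus; rewrite Rplus_opp_r, Rabs_R0. lra. }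
  exists A. split; auto. intros h. destruct (Hh h) as [a [u [Aa [Bu E]]]].
  exists a. split; auto. intros x. rewrite E.
  replace (proj1_sig a x + proj1_sig u x - proj1_sig a x) with (proj1_sig u x - proj1_sig z x)
    by (simpl; ring).
  apply sup_ball_lt; auto.
Qed.

Lemma lindelof_Cu_narrow : lindelof opC -> Cu_narrow op.
Proof.
  intros HL eps He.
  destruct (HL (fun W => exists h, W = sup_ball h eps)) as [G [HG [GF Gc]]].
  - intros U [h ->]. apply HCu, sup_ball_Cu_open.
  - intros h. exists (sup_ball h eps). split; [exists h; auto|apply sup_ball_center; auto].
  - set (center := fun W => epsilon (inhabits (zeroC op Ht)) (fun h => W = sup_ball h eps)).
    exists (fun y => exists W, G W /\ y = center W). split; [apply countable_image; auto|].
    intros h. destruct (Gc h) as [W [GW Wh]]. exists (center W). split; [exists W; auto|].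
    rewrite (epsilon_spec (inhabits (zeroC op Ht)) (fun h => W = sup_ball h eps) (GF W GW)) in Wh.
    apply sup_ball_lt; auto.
Qed.

Definition sup_separated (eps : R) (M : CX op -> Prop) : Prop :=
  forall f g, M f -> M g -> f <> g -> exists x, eps <= Rabs (proj1_sig f x - proj1_sig g x).

(* The balls of radius [eps/2] around an [eps]-separated family are pairwise disjoint. *)
Lemma ccc_sup_separated_countable eps M :
  0 < eps -> ccc opC -> sup_separated eps M -> countable M.
Proof.
  intros He Hccc SM.
  destruct (Hccc (fun W => exists f, M f /\ W = sup_ball f (eps / 2))) as [c Hc].
  - intros U [f [Mf ->]]. split; [apply HCu, sup_ball_Cu_open|exists f; apply sup_ball_center; lra].
  - intros U V [f [Mf ->]] [g [Mg ->]] UV h [Bf Bg].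
    assert (f <> g) by (intros ->; auto).
    destruct (SM f g Mf Mg H) as [x Hx].
    pose proof (sup_ball_lt _ _ _ Bf x). pose proof (sup_ball_lt _ _ _ Bg x).
    pose proof (Rabs_triang (proj1_sig f x - proj1_sig h x) (proj1_sig h x - proj1_sig g x)).
    rewrite Rabs_minus_sym in H0.
    replace (proj1_sig f x - proj1_sig h x + (proj1_sig h x - proj1_sig g x)) with
      (proj1_sig f x - proj1_sig g x) in H2 by ring. lra.
  - exists (fun f => c (sup_ball f (eps / 2))). intros f g Mf Mg E.
    apply Hc in E; [|exists f; auto|exists g; auto].
    apply NNPP. intros Hfg. destruct (SM f g Mf Mg Hfg) as [x Hx].
    assert (Bf : sup_ball g (eps/2) f) by (rewrite <- E; apply sup_ball_center; lra).
    pose proof (sup_ball_lt _ _ _ Bf x). lra.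
Qed.

(* A maximal [eps]-separated family is an [eps]-net. *)
Lemma ccc_Cu_narrow : ccc opC -> Cu_narrow op.
Proof.
  intros Hccc eps He.
  destruct (zorn_sets (sup_separated eps)) as [M [SM HM]].
  { intros F HF Htot f g [A [FA Af]] [B [FB Bg]] Hfg.
    destruct (Htot A B FA FB) as [AB|BA]; [apply (HF B FB)|apply (HF A FA)]; auto. }
  exists M. split; [apply (ccc_sup_separated_countable eps); auto|].
  intros h. apply NNPP. intros Nh.
  assert (Far : forall a, M a -> exists x, eps <= Rabs (proj1_sig h x - proj1_sig a x)).
  { intros a Ma. apply NNPP. intros NF. apply Nh. exists a. split; auto. intros x.
    apply Rnot_le_lt. intros L. apply NF. exists x; auto. }
  assert (Mh : M h).
  { apply (HM (fun g => M g \/ g = h)); [intros g; auto| |right; auto].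
    intros f g [Mf| ->] [Mg| ->] Hfg.
    - apply SM; auto.
    - destruct (Far f Mf) as [x Hx]. exists x. rewrite Rabs_minus_sym; auto.
    - apply Far; auto.
    - exfalso; auto. }
  destruct (Far h Mh) as [x Hx]. unfold Rminus in Hx. rewrite Rplus_opp_r, Rabs_R0 in Hx. lra.
Qed.

End FinerThanCu.

Section DenseSeq.
Variable D : nat -> CX op.
Hypothesis HD : Cu_dense_seq D.

Lemma Cu_dense_seq_hits U : Cu_open op U -> (exists g, U g) -> exists n, U (D n).
Proof.
  intros oU [g Ug]. destruct (oU g Ug) as [e [He HU]]. destruct (HD g e He) as [n Hn].
  exists n. apply HU. intros x. rewrite Rabs_minus_sym. auto.
Qed.

Lemma Cu_dense_seq_separable : separable (Cu_open op).
Proof.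
  exists (fun g => exists n, g = D n). split.
  - apply (countable_of_range _ D). intros a [n ->]. exists n; auto.
  - intros U oU Hne. destruct (Cu_dense_seq_hits U oU Hne) as [n Hn].
    exists (D n). split; auto. exists n; auto.
Qed.

Lemma Cu_dense_seq_second_countable : second_countable (Cu_open op).
Proof.
  set (ball k := sup_ball (D (fst (of_nat k))) (/ (INR (snd (of_nat k)) + 1))).
  exists (fun V => exists k, V = ball k). split; [|split].
  - apply (countable_of_range _ ball). intros a [k ->]. exists k; auto.
  - intros V [k ->]. apply sup_ball_Cu_open.
  - intros U g oU Ug. destruct (oU g Ug) as [e [He HU]].
    destruct (inv_succ_small (e / 2)) as [j Hj]; [lra|]. pose proof (inv_succ_pos j).
    destruct (HD g (/ (INR j + 1) / 2)) as [n Hn]; [lra|].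
    destruct (of_nat_surj n j) as [k Hk].
    exists (ball k). unfold ball. rewrite Hk. simpl.
    split; [exists k; unfold ball; rewrite Hk; auto|split].
    + exists (/ (INR j + 1) / 2). split; [lra|]. intros x. specialize (Hn x). lra.
    + intros g' Hg'. apply HU. intros x. pose proof (sup_ball_lt _ _ _ Hg' x). specialize (Hn x).
      pose proof (Rabs_triang (proj1_sig g' x - proj1_sig (D n) x) (proj1_sig (D n) x - proj1_sig g x)).
      rewrite (Rabs_minus_sym (proj1_sig (D n) x)) in H1.
      replace (proj1_sig g' x - proj1_sig (D n) x + (proj1_sig (D n) x - proj1_sig g x)) with
        (proj1_sig g' x - proj1_sig g x) in H1 by ring. lra.
Qed.

Lemma Cu_dense_seq_ccc : ccc (Cu_open op).
Proof.
  intros F HF Hdis.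
  set (c := fun U : CX op -> Prop => epsilon (inhabits 0%nat) (fun n => U (D n))).
  assert (Hc : forall U, F U -> U (D (c U))).
  { intros U FU. apply (epsilon_spec (inhabits 0%nat) (fun n => U (D n))).
    destruct (HF U FU). apply Cu_dense_seq_hits; auto. }
  exists c. intros U V FU FV E. apply NNPP. intros NE.
  apply (Hdis U V FU FV NE (D (c U))). split; [apply Hc; auto|rewrite E; apply Hc; auto].
Qed.

Lemma Cu_dense_seq_aleph0_bounded : aleph0_bounded_C op (Cu_open op).
Proof.
  intros U [V [oV [VU Hz]]]. set (z := zeroC op Ht).
  exists (fun g => exists n, g = D n). split.
  - apply (countable_of_range _ D). intros a [n ->]. exists n; auto.
  - intros h. destruct (oV z (Hz z (fun x => eq_refl))) as [e [He HV]].
    destruct (HD h e He) as [n Hn].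
    set (u := exist (fun f => continuous op f) (fun x => proj1_sig h x - proj1_sig (D n) x)
                (continuous_minus op Ht _ _ (proj2_sig h) (proj2_sig (D n))) : CX op).
    exists (D n), u. split; [exists n; auto|split].
    + apply VU, HV. intros x. simpl. rewrite Rminus_0_r. auto.
    + intros x. simpl. ring.
Qed.

End DenseSeq.

End FunctionSpace.

Lemma IZR_nat_diff k : IZR k = INR (Z.to_nat k) - INR (Z.to_nat (- k)).
Proof.
  destruct (Z_le_gt_dec 0 k).
  - replace (Z.to_nat (- k)) with 0%nat by lia. simpl.
    rewrite INR_IZR_INZ, Z2Nat.id by lia. ring.
  - replace (Z.to_nat k) with 0%nat by lia. simpl.
    rewrite INR_IZR_INZ, Z2Nat.id by lia. rewrite opp_IZR. ring.
Qed.

(* [(a - b) / (c + 1)] for [m] encoding [(a, (b, c))]: an enumeration of the rationals. *)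
Definition rat_enum (m : nat) : R :=
  (INR (fst (of_nat m)) - INR (fst (of_nat (snd (of_nat m)))))
    / (INR (snd (of_nat (snd (of_nat m)))) + 1).

Lemma rat_enum_dense y eps : 0 < eps -> exists m, Rabs (rat_enum m - y) < eps.
Proof.
  intros He. destruct (inv_succ_small eps He) as [c Hc].
  set (z := y * (INR c + 1)). destruct (archimed z) as [H1 H2].
  set (k := up z).
  destruct (of_nat_surj (Z.to_nat (- k)) c) as [m1 Hm1].
  destruct (of_nat_surj (Z.to_nat k) m1) as [m Hm].
  exists m. unfold rat_enum. rewrite Hm. simpl. rewrite Hm1. simpl.
  rewrite <- IZR_nat_diff. fold k.
  assert (Hc1 : 0 < INR c + 1) by (pose proof (pos_INR c); lra).
  replace (IZR k / (INR c + 1) - y) with ((IZR k - z) / (INR c + 1)) by (unfold z; field; lra).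
  unfold Rdiv. rewrite Rabs_mult, Rabs_inv, (Rabs_right (INR c + 1)) by lra.
  assert (Rabs (IZR k - z) <= 1) by (unfold k; rewrite Rabs_right; lra).
  apply Rle_lt_trans with (1 * / (INR c + 1)); [|lra].
  apply Rmult_le_compat_r; [left; apply Rinv_0_lt_compat|]; auto.
Qed.

Lemma list_min_pos {A : Type} (g : A -> R) (l : list A) : (forall a, 0 < g a) ->
  exists m, 0 < m /\ forall a, In a l -> m <= g a.
Proof.
  intros H. induction l as [|a l [m [Hm Hm']]].
  - exists 1. split; [lra|]. intros a [].
  - exists (Rmin m (g a)). split; [apply Rmin_glb_lt; auto|].
    intros b [<-|Hb]; [apply Rmin_r|]. pose proof (Rmin_l m (g a)). pose proof (Hm' b Hb). lra.
Qed.

Section CompactMetric.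
Context {X : Type} (op : (X -> Prop) -> Prop) (d : X -> X -> R).
Hypotheses (Ht : is_topology op) (Hc : compact_space op).
Hypotheses (dpos : forall x y, 0 <= d x y) (deq : forall x y, d x y = 0 <-> x = y)
  (dsym : forall x y, d x y = d y x) (dtri : forall x y z, d x z <= d x y + d y z)
  (dop : forall U, op U <-> (forall x, U x -> exists eps, 0 < eps /\ forall y, d x y < eps -> U y)).

Lemma compact_finite_net eta : 0 < eta -> exists l : list X, forall x, exists p, In p l /\ d p x < eta.
Proof.
  intros He. apply (compact_finite_subcover op (fun p y => d p y < eta)); auto.
  - intros p. apply (ball_open op d dtri dop).
  - intros x. exists x. rewrite (dist_refl d deq). auto.
Qed.

(* Lebesgue-number argument for the cover by the balls [B(x, rad x)]. *)
Lemma uniform_continuity f : continuous op f -> forall eps, 0 < eps ->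
  exists dl, 0 < dl /\ forall x y, d x y < dl -> Rabs (f x - f y) < eps.
Proof.
  intros Hf eps He.
  set (P := fun x e => 0 < e /\ forall y, d x y < 2 * e -> Rabs (f y - f x) < eps / 2).
  assert (HP : forall x, exists e, P x e).
  { intros x. destruct (continuous_local op f Hf x (eps / 2)) as [W [oW [Wx HW]]]; [lra|].
    destruct (open_contains_ball op d dop W x oW Wx) as [e [He' HWe]].
    exists (e / 2). split; [lra|]. intros y Hy. apply HW, HWe. lra. }
  set (rad := fun x => epsilon (inhabits 1) (P x)).
  assert (Hrad : forall x, P x (rad x)) by (intros x; exact (epsilon_spec _ (P x) (HP x))).
  destruct (compact_finite_subcover op (fun p y => d p y < rad p)) as [l Hl]; auto.
  { intros p. apply (ball_open op d dtri dop). }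
  { intros x. exists x. rewrite (dist_refl d deq). apply Hrad. }
  destruct (list_min_pos rad l) as [m [Hm Hm']]; [intros x; apply Hrad|].
  exists m. split; auto. intros x y Hxy.
  destruct (Hl x) as [p [Ip Hpx]]. pose proof (Hm' p Ip). destruct (Hrad p) as [_ Hp].
  assert (Hx : Rabs (f x - f p) < eps / 2) by (apply Hp; lra).
  assert (Hy : Rabs (f y - f p) < eps / 2) by (apply Hp; pose proof (dtri p x y); lra).
  rewrite Rabs_minus_sym in Hy. pose proof (Rabs_triang (f x - f p) (f p - f y)).
  replace (f x - f p + (f p - f y)) with (f x - f y) in H0 by ring. lra.
Qed.

Definition cone_min (L K : R) (l : list (X * R)) (x : X) : R :=
  fold_right (fun pq acc => Rmin (snd pq + L * d (fst pq) x) acc) K l.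

Lemma continuous_cone_min L K l : continuous op (cone_min L K l).
Proof.
  induction l as [|pq l IH]; simpl; [apply continuous_const; auto|].
  apply continuous_min; auto. apply continuous_plus; auto; [apply continuous_const; auto|].
  apply continuous_scal; auto. apply (continuous_dist op d Ht dpos deq dsym dtri dop).
Qed.

Lemma cone_min_le L K l x pq : In pq l -> cone_min L K l x <= snd pq + L * d (fst pq) x.
Proof.
  induction l as [|a l IH]; simpl; [intros []|]. intros [<-|Hi]; [apply Rmin_l|].
  pose proof (Rmin_r (snd a + L * d (fst a) x) (cone_min L K l x)). pose proof (IH Hi). lra.
Qed.

Lemma cone_min_ge L K l x B :
  B <= K -> (forall pq, In pq l -> B <= snd pq + L * d (fst pq) x) -> B <= cone_min L K l x.
Proof.
  intros HK. induction l as [|a l IH]; intros H; simpl; auto.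
  apply Rmin_glb; [apply H; left; auto|]. apply IH. intros; apply H; right; auto.
Qed.

(* Steep cones ([L dl > 2M + 1]) centred at a fine net reproduce [f] from below and above. *)
Lemma cone_min_approx (f : X -> R) (q : X -> R) (net : list X) (M dl eps L K eta : R) :
  (forall x, Rabs (f x) <= M) -> (forall x y, d x y < dl -> Rabs (f x - f y) < eps / 4) ->
  0 <= L -> 2 * M + 1 < L * dl -> M < K -> 0 < eta <= dl -> L * eta <= eps / 4 ->
  (forall x, exists p, In p net /\ d p x < eta) -> (forall p, Rabs (q p - f p) < eps / 4) ->
  forall x, Rabs (cone_min L K (map (fun p => (p, q p)) net) x - f x) < eps.
Proof.
  intros HM Hu HL HLdl HK Heta HLeta Hnet Hq x.
  set (F := cone_min L K (map (fun p => (p, q p)) net) x).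
  pose proof (HM x) as HMx. pose proof (Rle_abs (f x)).
  assert (He : 0 < eps) by (pose proof (Rabs_pos (q x - f x)); pose proof (Hq x); lra).
  assert (Up : F < f x + 3 * eps / 4).
  { destruct (Hnet x) as [p [Ip Hp]]. pose proof (Hq p). pose proof (dpos p x).
    assert (Hle : F <= q p + L * d p x) by (apply (cone_min_le L K _ x (p, q p)), (in_map (fun p => (p, q p))); auto).
    assert (Hfp : Rabs (f p - f x) < eps / 4) by (apply Hu; lra).
    assert (L * d p x <= L * eta) by (apply Rmult_le_compat_l; lra).
    unfold Rabs in *; repeat destruct Rcase_abs; lra. }
  assert (Lo : f x - eps / 2 <= F).
  { apply cone_min_ge; [lra|]. intros pq Hpq. apply in_map_iff in Hpq.
    destruct Hpq as [p [<- Ip]]. simpl. pose proof (Hq p). pose proof (dpos p x).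
    destruct (Rlt_le_dec (d p x) dl) as [Lt|Ge].
    - pose proof (Hu p x Lt). assert (0 <= L * d p x) by (apply Rmult_le_pos; auto).
      unfold Rabs in *; repeat destruct Rcase_abs; lra.
    - assert (L * dl <= L * d p x) by (apply Rmult_le_compat_l; auto).
      pose proof (HM p). unfold Rabs in *; repeat destruct Rcase_abs; lra. }
  unfold Rabs; destruct Rcase_abs; lra.
Qed.

Definition net_of_mesh (n : nat) : list X :=
  epsilon (inhabits nil) (fun l => forall x, exists p, In p l /\ d p x < / (INR n + 1)).

Lemma net_of_mesh_spec n : forall x, exists p, In p (net_of_mesh n) /\ d p x < / (INR n + 1).
Proof.
  apply (epsilon_spec (inhabits nil) (fun l => forall x, exists p, In p l /\ d p x < / (INR n + 1))).
  apply compact_finite_net, inv_succ_pos.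
Qed.

Lemma combine_map_r {A B : Type} (l : list A) (m : A -> B) :
  combine l (map m l) = map (fun p => (p, m p)) l.
Proof. induction l; simpl; auto. rewrite IHl. auto. Qed.

(* [k] encodes [(n, (L, (K, c)))]: mesh [1/(n+1)], slope [L], cap [K], rational codes [c]. *)
Definition cone_seq (k : nat) : CX op :=
  let '(n, k1) := of_nat k in let '(L, k2) := of_nat k1 in let '(K, c) := of_nat k2 in
  exist _ (cone_min (INR L) (INR K)
             (combine (net_of_mesh n) (map rat_enum (nat_list_decode c))))
          (continuous_cone_min _ _ _).

Lemma cone_seq_dense : Cu_dense_seq cone_seq.
Proof.
  intros h eps He. set (f := proj1_sig h). pose proof (proj2_sig h) as Hf. fold f in Hf.
  destruct (compact_bounded op f Hc Hf) as [M0 HM0]. set (M := Rabs M0).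
  assert (HM : forall x, Rabs (f x) <= M).
  { intros x. pose proof (HM0 x). pose proof (Rle_abs M0). unfold M. lra. }
  assert (HM0' : 0 <= M) by apply Rabs_pos.
  destruct (uniform_continuity f Hf (eps / 4)) as [dl [Hdl Hu]]; [lra|].
  destruct (nat_above ((2 * M + 1) / dl)) as [L HL].
  destruct (nat_above M) as [K HK].
  assert (HL1 : 0 < INR L + 1) by (pose proof (pos_INR L); lra).
  set (eta := Rmin dl (eps / (4 * (INR L + 1)))).
  assert (Heta : 0 < eta) by (apply Rmin_glb_lt; auto; apply Rdiv_lt_0_compat; lra).
  destruct (inv_succ_small eta Heta) as [n Hn].
  set (mc := fun p => epsilon (inhabits 0%nat) (fun m => Rabs (rat_enum m - f p) < eps / 4)).
  assert (Hmc : forall p, Rabs (rat_enum (mc p) - f p) < eps / 4).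
  { intros p. apply (epsilon_spec (inhabits 0%nat) (fun m => Rabs (rat_enum m - f p) < eps / 4)).
    apply rat_enum_dense. lra. }
  destruct (nat_list_decode_surj (map mc (net_of_mesh n))) as [c Hcl].
  exists (to_nat (n, to_nat (L, to_nat (K, c)))). intros x.
  unfold cone_seq. rewrite !cancel_of_to. simpl.
  rewrite Hcl, map_map, combine_map_r, Rabs_minus_sym. fold f.
  pose proof (Rmin_l dl (eps / (4 * (INR L + 1)))). pose proof (Rmin_r dl (eps / (4 * (INR L + 1)))).
  pose proof (inv_succ_pos n). fold eta in H, H0.
  apply (cone_min_approx f (fun p => rat_enum (mc p)) _ M dl eps (INR L) (INR K) (/ (INR n + 1)));
    auto; try lra.
  - apply pos_INR.
  - apply Rmult_lt_reg_r with (/ dl); [apply Rinv_0_lt_compat; auto|].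
    rewrite Rmult_assoc, Rinv_r by lra. unfold Rdiv in HL. lra.
  - apply Rle_trans with (INR L * (eps / (4 * (INR L + 1)))).
    + apply Rmult_le_compat_l; [apply pos_INR|lra].
    + apply Rmult_le_reg_r with (4 * (INR L + 1)); [lra|].
      replace (INR L * (eps / (4 * (INR L + 1))) * (4 * (INR L + 1))) with (INR L * eps)
        by (field; lra). nra.
  - apply net_of_mesh_spec.
Qed.

End CompactMetric.

Lemma compact_metrizable_Cu_dense_seq {X : Type} (op : (X -> Prop) -> Prop) :
  is_topology op -> compact_space op -> metrizable op -> exists D : nat -> CX op, Cu_dense_seq D.
Proof.
  intros Ht Hc [d [d1 [d2 [d3 [d4 d5]]]]].
  exists (cone_seq op d Ht d1 d2 d3 d4 d5). exact (cone_seq_dense op d Ht Hc d1 d2 d3 d4 d5).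
Qed.

(* For compact [X] every topology between [C_u] and [C_gamma] is [C_u] itself. *)
Lemma compact_metrizable_iff {X : Type} (op : (X -> Prop) -> Prop)
    (opC : (CX op -> Prop) -> Prop) (P : ((CX op -> Prop) -> Prop) -> Prop) :
  tychonoff op ->
  (forall W, Cu_open op W -> opC W) -> (forall W, opC W -> Cgamma_open op W) ->
  (P opC -> Cu_narrow op) -> (forall D : nat -> CX op, Cu_dense_seq D -> P (Cu_open op)) ->
  (P opC <-> compact_space op /\ metrizable op).
Proof.
  intros HX HuC HCg Hnarrow Hdense. pose proof HX as [Ht _]. split.
  - intros H. apply Cu_narrow_compact_metrizable; auto.
  - intros [Hc Hm]. replace opC with (Cu_open op).
    + destruct (compact_metrizable_Cu_dense_seq op Ht Hc Hm) as [D HD]. eauto.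
    + apply functional_extensionality. intros W. apply propositional_extensionality.
      split; auto. intros H. apply compact_Cgamma_open_Cu_open; auto.
Qed.

Theorem theorem2p4 (X : Type) (op : (X -> Prop) -> Prop) (HX : tychonoff op) :
  (aleph0_bounded_C op (Cgamma_open op) <-> compact_space op /\ metrizable op) /\
  (aleph0_bounded_C op (Cm_open op) <-> compact_space op /\ metrizable op) /\
  (aleph0_bounded_C op (Cu_open op) <-> compact_space op /\ metrizable op) /\
  (separable (Cu_open op) <-> compact_space op /\ metrizable op) /\
  (second_countable (Cgamma_open op) <-> compact_space op /\ metrizable op) /\
  (countable_network (Cgamma_open op) <-> compact_space op /\ metrizable op) /\
  (separable (Cgamma_open op) <-> compact_space op /\ metrizable op) /\
  (ccc (Cgamma_open op) <-> compact_space op /\ metrizable op) /\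
  (separable (Cm_open op) <-> compact_space op /\ metrizable op) /\
  (lindelof (Cm_open op) <-> compact_space op /\ metrizable op) /\
  (ccc (Cm_open op) <-> compact_space op /\ metrizable op).
Proof.
  pose proof HX as [Ht _]. set (z := zeroC op Ht).
  pose proof (Cu_open_Cm_open op Ht) as HuM. pose proof (Cm_open_Cgamma_open op) as HMG.
  pose proof (Cu_open_Cgamma_open op Ht) as HuG.
  assert (Hsep : forall opC, (forall W, Cu_open op W -> opC W) ->
            countable_network opC -> Cu_narrow op).
  { intros opC HuC H. apply (separable_Cu_narrow op opC HuC), (countable_network_separable _ z H). }
  repeat match goal with |- (_ <-> _) /\ _ => split end; apply compact_metrizable_iff; auto.
  - apply aleph0_bounded_Cu_narrow; auto.
  - apply Cu_dense_seq_aleph0_bounded; auto.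
  - apply aleph0_bounded_Cu_narrow; auto.
  - apply Cu_dense_seq_aleph0_bounded; auto.
  - apply aleph0_bounded_Cu_narrow; auto.
  - apply Cu_dense_seq_aleph0_bounded; auto.
  - apply separable_Cu_narrow; auto.
  - apply Cu_dense_seq_separable.
  - intros H. apply (Hsep _ HuG), second_countable_countable_network, H.
  - apply Cu_dense_seq_second_countable.
  - apply Hsep; auto.
  - intros D HD. apply second_countable_countable_network, (Cu_dense_seq_second_countable op D HD).
  - apply separable_Cu_narrow; auto.
  - apply Cu_dense_seq_separable.
  - apply ccc_Cu_narrow; auto.
  - apply Cu_dense_seq_ccc.
  - apply separable_Cu_narrow; auto.
  - apply Cu_dense_seq_separable.
  - apply lindelof_Cu_narrow; auto.
  - intros D HD. apply second_countable_lindelof, (Cu_dense_seq_second_countable op D HD).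
  - apply ccc_Cu_narrow; auto.
  - apply Cu_dense_seq_ccc.
Qed.
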